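(* Suppose the p-values are conditionally super-uniform: for every $t$ with $\theta_t=0$, $\mathbb{P}(p_t\le U\mid\mathcal{F}_{t-1})\le U$ a.s. for every $\mathcal F_{t-1}$-measurable $[0,1]$-valued $U$. Fix $d\in(0,1]$ and let $\mathrm{mem\text{-}FDP}^*(t)=\sum_{j\in\mathcal{H}_0(t)}\frac{\alpha_j}{dR^{\mathrm d}_{j-1}+1}$. Then for every $t\ge1$: if $\mathbb{E}[\mathrm{mem\text{-}FDP}^*(t)]\le\alpha$, then $\mathrm{mem\text{-}FDR}(t)\le\alpha$.
   Context: Let $\alpha\in(0,1)$ be a target level. Hypotheses are indexed by $t=1,2,\dots$; $\theta_t\in\{0,1\}$ is a fixed (non-random) indicator with $\theta_t=0$ iff the $t$-th null hypothesis is true. $p_1,p_2,\dots$ are $[0,1]$-valued random variables (p-values). Testing levels $\alpha_1,\alpha_2,\dots$ are $[0,1]$-valued random variables and the decisions are $\delta_t=\mathbb{1}\{p_t\le\alpha_t\}$. Let $\mathcal{F}_t=\sigma(\delta_1,\dots,\delta_t)$, $\mathcal{F}_0$ trivial; each $\alpha_t$ is required to be $\mathcal{F}_{t-1}$-measurable. $\mathcal{H}_0(t)=\{j\le t:\theta_j=0\}$. For a decay parameter $d\in(0,1]$, $R^{\mathrm d}_t=\sum_{j=1}^t d^{t-j}\delta_j$ with $R^{\mathrm d}_0=0$, and $\mathrm{mem\text{-}FDR}(t)=\mathbb{E}\big[\sum_{j\in\mathcal{H}_0(t)}d^{t-j}\delta_j\big/R^{\mathrm d}_t\big]$ with the convention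 $0/0=0$. *)

From HB Require Import structures.
From mathcomp Require Import all_boot all_order all_algebra.
From mathcomp Require Import all_classical all_reals all_analysis.
Set Implicit Arguments. Unset Strict Implicit. Unset Printing Implicit Defensive.
Import Order.TTheory GRing.Theory Num.Theory.
Local Open Scope classical_set_scope.
Local Open Scope ring_scope.

Section Defs.
Context {d0 : measure_display} {T : measurableType d0} {R : realType}.

(* Decisions delta_j = 1{p_j <= alpha_j} (as a 0/1 real). Hypotheses are
   indexed by j = 1, 2, ...; index 0 is unused. *)
Definition decision (p alpha : nat -> T -> R) (j : nat) (w : T) : R :=
  ((p j w <= alpha j w)%R)%:R.

(* Generators of F_t = sigma(delta_1, ..., delta_t): the preimages
   {w | delta_j(w) \in B}, 1 <= j <= t, B any set of booleans. *)
Definition filt_gen (p alpha : nat -> T -> R) (t : nat) : set (set T) :=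
  [set A | exists j (B : set bool), (1 <= j <= t)%N /\
     A = (fun w => p j w <= alpha j w) @^-1` B].

(* F_t as a collection of events (F_0 is the trivial sigma-algebra). *)
Definition filt (p alpha : nat -> T -> R) (t : nat) : set (set T) :=
  <<s filt_gen p alpha t >>.

Definition filt_meas (p alpha : nat -> T -> R) (t : nat) (X : T -> R) : Prop :=
  forall B : set R, measurable B -> filt p alpha t (X @^-1` B).

Definition Rdec (dd : R) (p alpha : nat -> T -> R) (t : nat) (w : T) : R :=
  \sum_(1 <= j < t.+1) dd ^+ (t - j) * decision p alpha j w.

(* Numerator: sum_{j in H0(t)} d^(t-j) delta_j ; theta j = false iff the
   j-th null is true. *)
Definition Vdec (dd : R) (theta : nat -> bool) (p alpha : nat -> T -> R)
  (t : nat) (w : T) : R :=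
  \sum_(1 <= j < t.+1 | ~~ theta j) dd ^+ (t - j) * decision p alpha j w.

(* mem-FDP(t); MathComp's x / 0 = 0 realizes the convention 0/0 = 0. *)
Definition memFDP (dd : R) (theta : nat -> bool) (p alpha : nat -> T -> R)
  (t : nat) (w : T) : R :=
  Vdec dd theta p alpha t w / Rdec dd p alpha t w.

Definition memFDPstar (dd : R) (theta : nat -> bool) (p alpha : nat -> T -> R)
  (t : nat) (w : T) : R :=
  \sum_(1 <= j < t.+1 | ~~ theta j)
     alpha j w / (dd * Rdec dd p alpha j.-1 w + 1).

End Defs.

From HB Require Import structures.
From mathcomp Require Import all_boot all_order all_algebra.
From mathcomp Require Import all_classical all_reals all_analysis.
From mathcomp Require Import measurable_realfun zify.
Import Order.TTheory GRing.Theory Num.Theory.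
Local Open Scope classical_set_scope.
Local Open Scope ring_scope.

(* If delta_j = 1 then R^d_t >= d^(t-j) (d R^d_{j-1} + 1), so pointwise
   mem-FDP(t) <= sum_{j in H0(t)} delta_j W_j with W_j = 1 / (d R^d_{j-1} + 1).
   The weight W_j is a nonnegative function of the decisions delta_1, ...,
   delta_{j-1}.  Super-uniformity with U = alpha_j says that
   E[delta_j; A] <= E[alpha_j; A] for every A in F_{j-1}; splitting A
   successively according to the values of delta_{j-1}, ..., delta_1 makes
   the weight constant on each piece and upgrades this to
   E[delta_j W_j] <= E[alpha_j W_j].  Summing over j in H0(t) gives
   E[mem-FDP(t)] <= E[mem-FDP*(t)]. *)

Section BitFunctions.
Context {V : Type}.

Definition depends_upto (n : nat) (G : (nat -> bool) -> V) :=
  forall b b', (forall i, (1 <= i <= n)%N -> b i = b' i) -> G b = G b'.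

Definition set_bit (b : nat -> bool) (m : nat) (v : bool) : nat -> bool :=
  fun i => if i == m then v else b i.

Lemma set_bit_id {b m v} : b m = v -> set_bit b m v = b.
Proof. by move=> bm; apply/funext => i; rewrite /set_bit; case: eqP => // ->. Qed.

Lemma depends_upto_set_bit {n G} v :
  depends_upto n.+1 G -> depends_upto n (fun b => G (set_bit b n.+1 v)).
Proof.
move=> dG b b' bb'; apply: dG => i /andP[i1 iS]; rewrite /set_bit.
by case: eqP => // /eqP ne; apply: bb'; lia.
Qed.

Lemma depends_upto0 {G : (nat -> bool) -> V} : depends_upto 0 G -> forall b b', G b = G b'.
Proof. by move=> dG b b'; apply: dG => i; lia. Qed.

End BitFunctions.

Section DiscountedCount.
Context {R : realType}.
Variable dd : R.

Definition disc_count (P0 : pred nat) (b : nat -> bool) (t : nat) : R :=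
  \sum_(1 <= i < t.+1 | P0 i) dd ^+ (t - i) * (b i)%:R.

Lemma depends_upto_disc_count {P0 t} : depends_upto t (fun b => disc_count P0 b t).
Proof.
move=> b b' bb'; rewrite /disc_count big_nat_cond [RHS]big_nat_cond.
by apply: eq_bigr => i /andP[/andP[i1 it] _]; rewrite bb' //; lia.
Qed.

Definition mem_weight (j : nat) (b : nat -> bool) : R :=
  (dd * disc_count xpredT b j.-1 + 1)^-1.

Lemma depends_upto_mem_weight j : depends_upto j.-1 (mem_weight j).
Proof. by move=> b b' bb'; rewrite /mem_weight (depends_upto_disc_count _ _ bb'). Qed.

Lemma mem_weight_ge0 j b : 0 <= dd -> 0 <= mem_weight j b.
Proof.
move=> dd0; rewrite invr_ge0 addr_ge0 // mulr_ge0 // sumr_ge0 // => i _.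
by rewrite mulr_ge0 ?exprn_ge0.
Qed.

End DiscountedCount.

Lemma integral_setI_setC {d : measure_display} {T : measurableType d} {R : realType}
  (mu : {measure set T -> \bar R}) (f : T -> \bar R) {A S : set T} :
  measurable A -> measurable S -> measurable_fun A f ->
  (\int[mu]_(w in A) f w =
   \int[mu]_(w in A `&` S) f w + \int[mu]_(w in A `&` ~` S) f w)%E.
Proof.
move=> mA mS mf; rewrite -integral_setU -?setIUr ?setUv ?setIT //.
- exact: measurableI.
- by apply: measurableI => //; exact: measurableC.
- by apply/disj_setPS => w [[_ Sw] [_ nSw]].
Qed.

Lemma ge0_integral_sum_cond {d : measure_display} {T : measurableType d} {R : realType}
  (mu : {measure set T -> \bar R}) (I : Type) (r : seq I) (P0 : pred I) (F : I -> T -> R) :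
  (forall i, measurable_fun setT (F i)) -> (forall i w, 0 <= F i w) ->
  (\int[mu]_w (\sum_(i <- r | P0 i) F i w)%:E =
   \sum_(i <- r | P0 i) \int[mu]_w (F i w)%:E)%E.
Proof.
move=> mF F0; under eq_integral do rewrite -sumEFin -big_filter.
rewrite ge0_integral_sum ?big_filter // => [i|i w _].
- by apply/measurable_EFinP; exact: mF.
- by rewrite lee_fin.
Qed.

Section Decisions.
Context {d0 : measure_display} {T : measurableType d0} {R : realType}.
Variables (p alpha : nat -> T -> R).
Hypothesis mp : forall j, measurable_fun setT (p j).
Hypothesis malpha : forall j, measurable_fun setT (alpha j).

Definition rejected (w : T) : nat -> bool := fun i => p i w <= alpha i w.

Lemma decisionE j w : decision p alpha j w = (rejected w j)%:R.
Proof. by []. Qed.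

Lemma measurable_rejected j : measurable_fun setT (rejected ^~ j).
Proof. exact: measurable_fun_ler. Qed.

Lemma measurable_decision j : measurable_fun setT (decision p alpha j).
Proof.
rewrite (_ : decision p alpha j = fun w => if rejected w j then 1 else 0).
  exact: measurable_fun_ifT (measurable_rejected j) _ _.
by apply/funext => w; rewrite /decision /rejected; case: (p j w <= alpha j w).
Qed.

Lemma decision_ge0 j w : 0 <= decision p alpha j w.
Proof. by rewrite /decision; case: (p j w <= alpha j w). Qed.

Lemma measurable_depends_upto {n} {G : (nat -> bool) -> R} :
  depends_upto n G -> measurable_fun setT (fun w => G (rejected w)).
Proof.
elim: n G => [|n IH] G dG.
  under eq_fun do rewrite (depends_upto0 dG _ xpred0).
  exact: measurable_cst.
have splitG w : G (rejected w) =
    decision p alpha n.+1 w * G (set_bit (rejected w) n.+1 true)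
  + (1 - decision p alpha n.+1 w) * G (set_bit (rejected w) n.+1 false).
  rewrite decisionE.
  case E: (rejected w n.+1); rewrite (set_bit_id E).
  - by rewrite mul1r subrr mul0r addr0.
  - by rewrite mul0r add0r subr0 mul1r.
under eq_fun do rewrite splitG.
apply: measurable_funD; apply: measurable_funM.
- exact: measurable_decision.
- exact: IH (depends_upto_set_bit true dG).
- exact: measurable_funB (measurable_decision _).
- exact: IH (depends_upto_set_bit false dG).
Qed.

Lemma filt_measurable {t A} : filt p alpha t A -> measurable A.
Proof.
move=> fA; apply: (smallest_sub (@sigma_algebra_measurable _ T) _ fA).
move=> _ [i [B [_ ->]]].
by have := measurable_rejected i measurableT B; rewrite setTI; apply.
Qed.

Lemma filt_rejected t j : (1 <= j <= t)%N -> filt p alpha t [set w | rejected w j].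
Proof. by move=> jt; apply: sub_gen_smallest; exists j, [set true]. Qed.

Lemma filtI t A B : filt p alpha t A -> filt p alpha t B -> filt p alpha t (A `&` B).
Proof. exact: (@measurableI _ (g_sigma_algebraType (filt_gen p alpha t))). Qed.

Lemma filtC t A : filt p alpha t A -> filt p alpha t (~` A).
Proof. exact: sigma_algebraC. Qed.

Lemma filtT t : filt p alpha t setT.
Proof. by rewrite -setC0; apply: filtC; exact: sigma_algebra0. Qed.

Section WeightedIntegrals.
Variables (mu : {measure set T -> \bar R}) (m : nat) (X Y : T -> R).
Hypotheses (mX : measurable_fun setT X) (mY : measurable_fun setT Y).
Hypotheses (X0 : forall w, 0 <= X w) (Y0 : forall w, 0 <= Y w).
Hypothesis leXY : forall A, filt p alpha m A ->
  (\int[mu]_(w in A) (X w)%:E <= \int[mu]_(w in A) (Y w)%:E)%E.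

Lemma le_integral_weighted_filt n G A : (n <= m)%N -> depends_upto n G ->
  (forall b, 0 <= G b) -> filt p alpha m A ->
  (\int[mu]_(w in A) (X w * G (rejected w))%:E <=
   \int[mu]_(w in A) (Y w * G (rejected w))%:E)%E.
Proof.
elim: n G A => [|n IH] G A nm dG G0 fA; have mA := filt_measurable fA.
- under eq_integral do rewrite (depends_upto0 dG _ xpred0) mulrC EFinM.
  under [X in (_ <= X)%E]eq_integral do rewrite (depends_upto0 dG _ xpred0) mulrC EFinM.
  rewrite !ge0_integralZl_EFin ?lee_wpmul2l ?lee_fin ?leXY //.
  + by move=> w _; rewrite lee_fin.
  + by apply/measurable_EFinP; exact: measurable_funTS.
  + by move=> w _; rewrite lee_fin.
  + by apply/measurable_EFinP; exact: measurable_funTS.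
- have mW : measurable_fun setT (fun w => G (rejected w)).
    exact: measurable_depends_upto dG.
  set S := [set w | rejected w n.+1].
  have fS : filt p alpha m S by apply: filt_rejected; lia.
  rewrite !(integral_setI_setC _ _ mA (filt_measurable fS)); try
    by apply/measurable_EFinP; apply: measurable_funTS; exact: measurable_funM.
  have fix_bit v B : {in B, forall w, rejected w n.+1 = v} -> forall Z : T -> R,
      (\int[mu]_(w in B) (Z w * G (rejected w))%:E =
       \int[mu]_(w in B) (Z w * G (set_bit (rejected w) n.+1 v))%:E)%E.
    by move=> Bv Z; apply: eq_integral => w /Bv/set_bit_id ->.
  have onS : {in A `&` S, forall w, rejected w n.+1 = true}.
    by move=> w; rewrite inE => -[].
  have offS : {in A `&` ~` S, forall w, rejected w n.+1 = false}.
    by move=> w; rewrite inE => -[_ /negP/negbTE].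
  apply: leeD.
  + rewrite !(fix_bit true _ onS).
    apply: IH (depends_upto_set_bit true dG) _ _; [lia | by [] | exact: filtI].
  + rewrite !(fix_bit false _ offS).
    apply: IH (depends_upto_set_bit false dG) _ _; [lia | by [] | ].
    by apply: filtI => //; exact: filtC.
Qed.

Lemma le_integral_weighted G : depends_upto m G -> (forall b, 0 <= G b) ->
  (\int[mu]_w (X w * G (rejected w))%:E <= \int[mu]_w (Y w * G (rejected w))%:E)%E.
Proof. by move=> dG G0; apply: le_integral_weighted_filt dG G0 (filtT m). Qed.

End WeightedIntegrals.

Section DiscountedRejections.
Variable dd : R.
Hypothesis dd0 : 0 <= dd.

Lemma RdecS t w :
  Rdec dd p alpha t.+1 w = dd * Rdec dd p alpha t w + decision p alpha t.+1 w.
Proof.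
rewrite /Rdec big_nat_recr //= subnn expr0 mul1r; congr (_ + _).
rewrite mulr_sumr; apply: eq_big_nat => i /andP[i1 it].
by rewrite mulrA -exprS; congr (_ ^+ _ * _); lia.
Qed.

Lemma Rdec_ge0 t w : 0 <= Rdec dd p alpha t w.
Proof. by apply: sumr_ge0 => i _; rewrite mulr_ge0 ?exprn_ge0 ?decision_ge0. Qed.

Lemma Rdec_addn t k w : dd ^+ k * Rdec dd p alpha t w <= Rdec dd p alpha (t + k) w.
Proof.
elim: k => [|k IH]; first by rewrite expr0 mul1r addn0.
rewrite addnS RdecS exprS -mulrA -[leLHS]addr0.
by apply: lerD; [exact: ler_wpM2l | exact: decision_ge0].
Qed.

Lemma Rdec_ge_rejected j t w : (1 <= j <= t)%N -> rejected w j ->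
  dd ^+ (t - j) * (dd * Rdec dd p alpha j.-1 w + 1) <= Rdec dd p alpha t w.
Proof.
move=> /andP[j1 jt] rej; have := Rdec_addn j (t - j) w; rewrite subnKC //.
suff -> : Rdec dd p alpha j w = dd * Rdec dd p alpha j.-1 w + 1 by [].
by rewrite -{1}(prednK j1) RdecS prednK // decisionE rej.
Qed.

Lemma mem_denom_gt0 j w : 0 < dd * Rdec dd p alpha j w + 1.
Proof. by rewrite ltr_wpDl ?mulr_ge0 ?Rdec_ge0. Qed.

Lemma mem_weightE j w :
  mem_weight dd j (rejected w) = (dd * Rdec dd p alpha j.-1 w + 1)^-1.
Proof. by []. Qed.

Lemma memFDP_ge0 theta t w : 0 <= memFDP dd theta p alpha t w.
Proof.
rewrite /memFDP divr_ge0 ?Rdec_ge0 //.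
by apply: sumr_ge0 => j _; rewrite mulr_ge0 ?exprn_ge0 ?decision_ge0.
Qed.

Lemma memFDP_le_weighted theta t w :
  memFDP dd theta p alpha t w <= \sum_(1 <= j < t.+1 | ~~ theta j)
     decision p alpha j w * mem_weight dd j (rejected w).
Proof.
have sum_ge0 : 0 <= \sum_(1 <= j < t.+1 | ~~ theta j)
    decision p alpha j w * mem_weight dd j (rejected w).
  by apply: sumr_ge0 => j _; rewrite mulr_ge0 ?decision_ge0 ?mem_weight_ge0.
rewrite /memFDP /Vdec.
have [->|Rt_neq0] := eqVneq (Rdec dd p alpha t w) 0; first by rewrite invr0 mulr0.
have Rt_gt0 : 0 < Rdec dd p alpha t w by rewrite lt_def Rt_neq0 Rdec_ge0.
rewrite mulr_suml big_nat_cond [leRHS]big_nat_cond.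
apply: ler_sum => j /andP[/andP[j1 jt] _].
have := @Rdec_ge_rejected j t w; rewrite decisionE mem_weightE.
have jt' : (1 <= j <= t)%N by lia.
case: (rejected w j) => [/(_ jt' isT) le_Rt | _] /=; last by rewrite mulr0 !mul0r.
by rewrite !mulr1n mulr1 mul1r ler_pdivrMr // mulrC ler_pdivlMr ?mem_denom_gt0.
Qed.

Lemma measurable_memFDP theta t : measurable_fun setT (memFDP dd theta p alpha t).
Proof.
apply: (measurable_depends_upto (n := t) (G := fun b =>
  disc_count dd (fun i => ~~ theta i) b t / disc_count dd xpredT b t)).
by move=> b b' bb'; congr (_ / _); apply: depends_upto_disc_count.
Qed.

Lemma measurable_mem_weight j : measurable_fun setT (fun w => mem_weight dd j (rejected w)).
Proof. exact: measurable_depends_upto (depends_upto_mem_weight dd j). Qed.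

Lemma le_integral_memFDP (mu : {measure set T -> \bar R}) theta t :
  (\int[mu]_w (memFDP dd theta p alpha t w)%:E <=
   \sum_(1 <= j < t.+1 | ~~ theta j)
     \int[mu]_w (decision p alpha j w * mem_weight dd j (rejected w))%:E)%E.
Proof.
have mF j : measurable_fun setT (fun w => decision p alpha j w * mem_weight dd j (rejected w)).
  exact: measurable_funM (measurable_decision j) (measurable_mem_weight j).
rewrite -ge0_integral_sum_cond // => [|j w]; last first.
  by rewrite mulr_ge0 ?decision_ge0 ?mem_weight_ge0.
apply: ge0_le_integral => // [w _|||w _].
- by rewrite lee_fin memFDP_ge0.
- by apply/measurable_EFinP; exact: measurable_memFDP.
- by apply/measurable_EFinP; under eq_fun do rewrite -big_filter; exact: measurable_sum.
- by rewrite lee_fin memFDP_le_weighted.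
Qed.

Lemma integral_memFDPstar (mu : {measure set T -> \bar R}) theta t :
  (forall j w, 0 <= alpha j w) ->
  (\int[mu]_w (memFDPstar dd theta p alpha t w)%:E =
   \sum_(1 <= j < t.+1 | ~~ theta j)
     \int[mu]_w (alpha j w * mem_weight dd j (rejected w))%:E)%E.
Proof.
move=> alpha0; apply: ge0_integral_sum_cond => [j|j w].
- exact: measurable_funM (malpha j) (measurable_mem_weight j).
- by rewrite mulr_ge0 ?mem_weight_ge0.
Qed.

End DiscountedRejections.
End Decisions.

Theorem theorem4 (d0 : measure_display) (T : measurableType d0) (R : realType)
  (P : probability T R) (alpha_level dd : R)
  (theta : nat -> bool) (p alpha : nat -> T -> R) :
  0 < alpha_level < 1 ->
  0 < dd <= 1 ->
  (forall j, measurable_fun setT (p j)) ->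
  (forall j, measurable_fun setT (alpha j)) ->
  (forall j w, 0 <= p j w <= 1) ->
  (forall j w, 0 <= alpha j w <= 1) ->
  (forall t, (1 <= t)%N -> filt_meas p alpha t.-1 (alpha t)) ->
  (forall t, (1 <= t)%N -> theta t = false ->
     forall U : T -> R, filt_meas p alpha t.-1 U ->
     (forall w, 0 <= U w <= 1) ->
     forall A, filt p alpha t.-1 A ->
     (\int[P]_(w in A) (((p t w <= U w)%R)%:R : R)%:E <= \int[P]_(w in A) (U w)%:E)%E) ->
  forall t, (1 <= t)%N ->
  (\int[P]_w (memFDPstar dd theta p alpha t w)%:E <= alpha_level%:E)%E ->
  (\int[P]_w (memFDP dd theta p alpha t w)%:E <= alpha_level%:E)%E.
Proof.
move=> _ /andP[/ltW dd0 _] mp malpha _ alpha01 alpha_pred superunif t _ star_le.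
have alpha0 j w : 0 <= alpha j w by case/andP: (alpha01 j w).
apply: le_trans star_le; apply: le_trans (le_integral_memFDP _ _ mp malpha _ dd0 P theta t) _.
rewrite (integral_memFDPstar _ _ mp malpha _ dd0) //.
rewrite big_nat_cond [leRHS]big_nat_cond.
apply: lee_sum => j /andP[/andP[j1 _] null_j].
apply: (le_integral_weighted _ _ mp malpha P j.-1 (decision p alpha j) (alpha j)).
- exact: measurable_decision.
- exact: malpha.
- exact: decision_ge0.
- exact: alpha0.
- exact: superunif j1 (negbTE null_j) _ (alpha_pred j j1) (alpha01 j).
- exact: depends_upto_mem_weight.
- by move=> b; exact: mem_weight_ge0.
Qed.
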